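(* If $S\subseteq\mathbb N^d$ is a PI-monoid, then $m(S)\in S\setminus\{0\}$. In particular, $m(S)=\min_{\preceq_{\mathbb N^d}}(S\setminus\{0\})$.
   Context: $\preceq_{\mathbb N^d}$ is the componentwise partial order on $\mathbb N^d$. For a submonoid $S$ of $\mathbb N^d$, its multiplicity is $m(S)=\inf_{\preceq_{\mathbb N^d}}(S\setminus\{0\})$. A submonoid $S$ of $\mathbb N^d$ is a PI-monoid if there exist a submonoid $T$ of $\mathbb N^d$ and $\mathbf a\in T\setminus\{0\}$ with $S=(\mathbf a+T)\cup\{0\}$. *)

From mathcomp Require Import all_boot.
Set Implicit Arguments. Unset Strict Implicit. Unset Printing Implicit Defensive.

Definition vec (d : nat) := {ffun 'I_d -> nat}.

Definition vzero (d : nat) : vec d := [ffun => 0%N].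
Definition vadd (d : nat) (x y : vec d) : vec d := [ffun i => x i + y i].

Definition vle (d : nat) (x y : vec d) : Prop := forall i : 'I_d, x i <= y i.

Definition is_submonoid (d : nat) (S : vec d -> Prop) : Prop :=
  S (vzero d) /\ forall x y, S x -> S y -> S (vadd x y).

Definition nonzero_part (d : nat) (S : vec d -> Prop) : vec d -> Prop :=
  fun x => S x /\ x <> vzero d.

Definition is_inf (d : nat) (A : vec d -> Prop) (m : vec d) : Prop :=
  (forall x, A x -> vle m x) /\
  (forall l, (forall x, A x -> vle l x) -> vle l m).

Definition is_min (d : nat) (A : vec d -> Prop) (m : vec d) : Prop :=
  A m /\ forall x, A x -> vle m x.

Definition PI_monoid (d : nat) (S : vec d -> Prop) : Prop :=
  is_submonoid S /\
  exists (T : vec d -> Prop) (a : vec d),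
    is_submonoid T /\ T a /\ a <> vzero d /\
    forall x, S x <-> (x = vzero d \/ exists t, T t /\ x = vadd a t).

From mathcomp Require Import all_boot.

(* Since 0 lies in T, the shift a = a + 0 is a nonzero element of S, and every
   other nonzero element a + t dominates it; so a is the minimum of S \ {0},
   hence its infimum, and infima are unique by antisymmetry. *)

Lemma vaddr0 {d : nat} (x : vec d) : vadd x (vzero d) = x.
Proof. by apply/ffunP=> i; rewrite !ffunE addn0. Qed.

Lemma vle_addr {d : nat} (x y : vec d) : vle x (vadd x y).
Proof. by move=> i; rewrite ffunE leq_addr. Qed.

Lemma vle_anti {d : nat} (x y : vec d) : vle x y -> vle y x -> x = y.
Proof.
by move=> lexy leyx; apply/ffunP=> i; apply/eqP; rewrite eqn_leq lexy leyx.
Qed.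

Lemma is_min_is_inf {d : nat} {A : vec d -> Prop} {m : vec d} :
  is_min A m -> is_inf A m.
Proof. by move=> [Am minm]; split=> // l; apply. Qed.

Lemma is_inf_unique {d : nat} {A : vec d -> Prop} {m m' : vec d} :
  is_inf A m -> is_inf A m' -> m = m'.
Proof.
move=> [lbm glbm] [lbm' glbm'].
by apply: vle_anti; [exact: glbm' | exact: glbm].
Qed.

Lemma PI_monoid_min {d : nat} {S : vec d -> Prop} :
  PI_monoid S -> exists a, is_min (nonzero_part S) a.
Proof.
move=> [_ [T [a [[T0 _] [_ [a_neq0 defS]]]]]].
exists a; split.
- split=> //; apply/defS; right; exists (vzero d).
  by rewrite vaddr0.
- by move=> x [/defS [-> | [t [_ ->]]] x_neq0] //; apply: vle_addr.
Qed.

Theorem lemma5p4 (d : nat) (S : vec d -> Prop) :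
  PI_monoid S ->
  (exists m, is_inf (nonzero_part S) m) /\
  (forall m, is_inf (nonzero_part S) m ->
     nonzero_part S m /\ is_min (nonzero_part S) m).
Proof.
move=> /PI_monoid_min [a min_a].
have inf_a := is_min_is_inf min_a.
split; first by exists a.
move=> m /(is_inf_unique inf_a) <-.
by split; first case: min_a.
Qed.
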